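(* Let $k$ be a field of characteristic $p>0$, $P$ a finite poset, $R=\mathcal{R}_k[J(P)]$ the Hibi ring and $\mathfrak{m}=R_+$. Then for all sufficiently large $Q=p^e$ and every integer $r\ge(\operatorname{rank}^*P+2)(Q-1)+1$, we have $\mathfrak{m}^r\subseteq\mathfrak{m}^{[Q]}$.
   Context: Let $P=\{p_1,\dots,p_N\}$ be a finite poset and $J(P)$ the set of poset ideals of $P$ (down-closed subsets, including $\emptyset$ and $P$). The Hibi ring is $\mathcal{R}_k[J(P)]=k[\,T\prod_{p_i\in I}X_i\mid I\in J(P)\,]\subseteq k[T,X_1,\dots,X_N]$, each generator in degree $1$; $\mathfrak{m}=R_+$ is generated by these generators; $\mathfrak{m}^{[Q]}=(x^Q\mid x\in\mathfrak{m})$. $x\lessdot y$ means $x<y$ with no $z$ satisfying $x<z<y$. A path is a sequence $C=(q_1,\dots,q_t)$ of distinct elements of $P$ with $q_1$ minimal in $P$, consecutive elements related by $q_i\lessdot q_{i+1}$ or $q_{i+1}\lessdot q_i$, and $q_{t-1}\lessdot q_t$ (when $t\ge2$); it is maximal if $q_t$ is maximal in $P$. For $1<i<t$, $q_i$ is locally maximal if $q_{i-1}\lessdot q_i$ and $q_{i+1}\lessdot q_i$, locally minimal if $q_i\lessdot q_{i-1}$ and $q_i\lessdot q_{i+1}$; $q_1$ counts as locally minimal and $q_t$ as locally maximal. The decomposition $C=A_1+D_1+\cdots+D_{n-1}+A_n$ splits $C$ into consecutive blocks: $A_1$ is $q_1$ through the first locally maximal element, $D_1$ the following elements through the next locally minimal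 element, $A_2$ the following elements through the next locally maximal element, etc., $A_n$ ending at $q_t$; $t(A_i)$ is the last element of $A_i$, $V(\cdot)$ the set of elements of a block, $\langle A\rangle=\{q\in P\mid q\le t(A)\}$, and $\langle A_i\setminus t(A_i)\rangle$ the poset ideal generated by the elements of $A_i$ other than $t(A_i)$. $C$ satisfies ( * ) if for all $1\le i\le n-1$: (1) $V(D_i)\cap(\bigcup_{m=1}^{i-1}\langle A_m\rangle\cup\langle A_i\setminus t(A_i)\rangle\cup\{t(A_i)\})=\emptyset$; (2) $V(A_{i+1})\cap\bigcup_{m=1}^{i}\langle A_m\rangle=\emptyset$. $\operatorname{len}^*C=\#\{i\mid q_i\lessdot q_{i+1}\}$, and $\operatorname{rank}^*P$ is the maximum of $\operatorname{len}^*C$ over maximal paths $C$ satisfying ( * ). *)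

From HB Require Import structures.
From mathcomp Require Import all_boot all_order all_algebra.
From mathcomp Require Import mpoly.
Set Implicit Arguments.
Unset Strict Implicit.
Unset Printing Implicit Defensive.
Import Order.Theory GRing.Theory.

Section PosetPaths.
Context {disp : Order.disp_t} {T : finPOrderType disp}.
Local Open Scope order_scope.

Definition covers (x y : T) : bool :=
  (x < y) && [forall z, ~~ ((x < z) && (z < y))].
Definition minimalb (x : T) : bool := [forall z, ~~ (z < x)].
Definition maximalb (x : T) : bool := [forall z, ~~ (x < z)].

(* s = (q_1, ..., q_t), stored 0-indexed: q j = q_{j+1}; x0 is a dummy default *)
Variables (x0 : T) (s : seq T).
Local Notation t := (size s).
Definition q (j : nat) : T := nth x0 s j.
Definition upstep (j : nat) : bool := covers (q j) (q j.+1).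
Definition downstep (j : nat) : bool := covers (q j.+1) (q j).

Definition is_path : bool :=
  [&& s != [::], uniq s, minimalb (q 0),
      all (fun j => upstep j || downstep j) (iota 0 t.-1)
    & (1 < t) ==> upstep (t - 2)].

Definition is_maximal_path : bool := is_path && maximalb (q t.-1).

Definition locmax (j : nat) : bool :=
  (j == t.-1) || [&& 0 < j, j < t.-1, upstep j.-1 & downstep j].
Definition locmin (j : nat) : bool :=
  (j == 0) || [&& 0 < j, j < t.-1, downstep j.-1 & upstep j].
Definition maxs : seq nat := filter locmax (iota 0 t).
Definition mins : seq nat := filter locmin (iota 0 t).
Definition nblocks : nat := size maxs.

(* block A_{b+1} (b 0-indexed): positions from just after the b-th locally
   minimal position (from 0 for b = 0) up to the b-th locally maximal one *)
Definition inA (b j : nat) : bool :=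
  ((b == 0) || (nth 0 mins b < j)) && (j <= nth 0 maxs b).
(* block D_{b+1}: positions after the b-th locally maximal position up to the
   (b+1)-th locally minimal one *)
Definition inD (b j : nat) : bool :=
  (nth 0 maxs b < j) && (j <= nth 0 mins b.+1).

Definition tA (b : nat) : T := q (nth 0 maxs b).
Definition VA (b : nat) : {set T} :=
  [set x | has (fun j => inA b j && (q j == x)) (iota 0 t)].
Definition VD (b : nat) : {set T} :=
  [set x | has (fun j => inD b j && (q j == x)) (iota 0 t)].
Definition downA (b : nat) : {set T} := [set y | y <= tA b].
Definition downAminus (b : nat) : {set T} :=
  [set y | has (fun j => [&& inA b j, j != nth 0 maxs b & y <= q j]) (iota 0 t)].

(* conditions (1) and (2) for i = b+1 *)
Definition cond1 (b : nat) : bool :=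
  [disjoint VD b &
     (\bigcup_(m < b) downA m) :|: downAminus b :|: [set tA b]].
Definition cond2 (b : nat) : bool :=
  [disjoint VA b.+1 & \bigcup_(m < b.+1) downA m].

Definition star : bool :=
  all (fun b => cond1 b && cond2 b) (iota 0 nblocks.-1).

End PosetPaths.

Section Rank.
Context {disp : Order.disp_t} {T : finPOrderType disp}.

Definition lenstar (s : seq T) : nat :=
  count (fun pr => covers pr.1 pr.2) (zip s (behead s)).

Definition good_path (s : seq T) : bool :=
  match s with
  | [::] => false
  | x0 :: _ => is_maximal_path x0 s && star x0 s
  end.

(* rank^* P : maximum of len^* over maximal paths satisfying ( * ).  Paths
   consist of distinct elements, so they have at most #|T| elements, and we
   range over all tuples of such sizes. *)
Definition rankstar : nat :=
  \max_(k < #|T|.+1) \max_(u : k.-tuple T | good_path u) lenstar u.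

End Rank.

(* Variable index ord0 is T, index lift ord0 (enum_rank p) is X_p.            *)
Section Hibi.
Context {disp : Order.disp_t} {T : finPOrderType disp} {K : fieldType}.
Local Notation PR := {mpoly K[#|T|.+1]}.
Local Open Scope ring_scope.

Definition varX (x : T) : 'I_#|T|.+1 := lift ord0 (enum_rank x).

Definition is_poset_ideal (I : {set T}) : bool :=
  [forall x, forall y, ((y <= x)%O && (x \in I)) ==> (y \in I)].

Definition hibi_gen (I : {set T}) : PR :=
  'X_ord0 * \prod_(x in I) 'X_(varX x).

Inductive inHibi : PR -> Prop :=
  | inHibi_gen (I : {set T}) : is_poset_ideal I -> inHibi (hibi_gen I)
  | inHibi_const (c : K) : inHibi c%:MP
  | inHibi_add f g : inHibi f -> inHibi g -> inHibi (f + g)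
  | inHibi_mul f g : inHibi f -> inHibi g -> inHibi (f * g).

(* m = R_+ : elements of R whose degree-0 component (T-degree 0) vanishes *)
Definition in_m (f : PR) : Prop :=
  inHibi f /\ (forall mm : 'X_{1.. #|T|.+1}, mm ord0 = 0%N -> mcoeff mm f = 0).

Definition ideal_gen (S : PR -> Prop) (f : PR) : Prop :=
  exists l : seq (PR * PR),
    (forall pr, pr \in l -> inHibi pr.1 /\ S pr.2) /\
    f = \sum_(pr <- l) pr.1 * pr.2.

Definition m_pow (r : nat) : PR -> Prop :=
  ideal_gen (fun g => exists xs : seq PR,
                [/\ size xs = r, (forall x, x \in xs -> in_m x)
                  & g = \prod_(x <- xs) x]).

Definition m_frob (Q : nat) : PR -> Prop :=
  ideal_gen (fun g => exists x, in_m x /\ g = x ^+ Q).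

End Hibi.

From HB Require Import structures.
From mathcomp Require Import all_boot all_order all_algebra.
From mathcomp Require Import mpoly.
From mathcomp Require Import zify ring.
Set Implicit Arguments.
Unset Strict Implicit.
Unset Printing Implicit Defensive.
Import Order.Theory GRing.Theory.

(* A generator of m^r is a product of r Hibi generators T * prod_(p in I) X_p;
   the exponent a(p) of X_p counts the ideals I containing p, so a is antitone.
   It suffices to find a poset ideal J with a >= Q on J, a <= r - Q off J and
   a - Q * 1_J antitone: the monomial is then (T * X_J)^Q times the product of
   the r - Q Hibi generators given by the layers {a - Q * 1_J >= k}.
   Take for J the elements reachable from the minimal elements with a > r - Q
   by allowed steps: down along any cover, or up along a cover into an element
   with a > r - Q or across which a drops by less than Q.  Everything but
   a >= Q on J follows from this closure property.  A failure of a >= Q gives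
   an allowed path from such a minimal element to a maximal element with
   a < Q.  Along it min(a, r - Q + 1) drops by at most Q - 1 at each up-cover
   into an element with a <= r - Q, and not at all otherwise, so the path has
   more than rank^* P such up-covers.  But removing loops and bypassing every
   descent q_j <= q_i by down-covers yields a path satisfying ( * ), whose
   len^* is at most rank^* P. *)


Section StepCount.
Variable A : Type.
Implicit Types (f g e : A -> A -> bool) (x : A) (p : seq A).

Fixpoint count_steps f x p : nat :=
  if p is y :: p' then f x y + count_steps f y p' else 0.

Lemma count_steps_cat f x p1 p2 :
  count_steps f x (p1 ++ p2) = count_steps f x p1 + count_steps f (last x p1) p2.
Proof. by elim: p1 x => [|y p IH] x //=; rewrite IH addnA. Qed.

Lemma count_steps_sub f g x p :
  subrel f g -> count_steps f x p <= count_steps g x p.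
Proof.
move=> fg; elim: p x => [|y p IH] x //=; apply: leq_add => //.
by case: (f x y) (@fg x y) => // ->.
Qed.

Lemma count_steps_gt0 f x p k :
  k < size p -> f (nth x (x :: p) k) (nth x p k) -> 0 < count_steps f x p.
Proof.
elim: p x k => [|y p IH] x [|k] //=; first by move=> _ ->.
rewrite addn_gt0 => lt_k f_k; apply/orP; right; apply: (IH y k lt_k).
move: f_k; rewrite (@set_nth_default _ (y :: p) y x); last by rewrite /= ltnW.
by rewrite (@set_nth_default _ p y x).
Qed.

Lemma count_steps_eq0 e f x p :
  path e x p -> (forall u v, e u v -> ~~ f u v) -> count_steps f x p = 0.
Proof.
move=> + ef; elim: p x => [|y p IH] x //= /andP[exy ep].
by rewrite IH // addn0 (negbTE (ef _ _ exy)).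
Qed.

End StepCount.

Lemma last_take (A : Type) (x : A) p i :
  i <= size p -> last x (take i p) = nth x (x :: p) i.
Proof.
elim: p x i => [|y p IH] x [|i] //= le_ip.
by rewrite IH // (@set_nth_default _ (y :: p) y x).
Qed.

Lemma take_drop_split3 (A : eqType) (x : A) p i j : i <= j -> j <= size p ->
  [/\ p = take i p ++ take (j - i) (drop i p) ++ drop j p,
      last x (take i p) = nth x (x :: p) i &
      last (nth x (x :: p) i) (take (j - i) (drop i p)) = nth x (x :: p) j].
Proof.
move=> le_ij le_jp; split.
- by rewrite -{2}(subnK le_ij) -drop_drop !cat_take_drop.
- by rewrite last_take // (leq_trans le_ij).
have lt_i : i < size (x :: p) by rewrite /= ltnS (leq_trans le_ij).
rewrite last_take; last by rewrite size_drop leq_sub2r.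
rewrite -(drop_nth x lt_i) nth_drop subnKC //.
by rewrite (@set_nth_default _ (x :: p) x).
Qed.

Lemma path_remove_loops (A : eqType) (e : rel A) x p : path e x p ->
  exists p', [/\ path e x p', uniq (x :: p'), last x p' = last x p &
                 forall f, count_steps f x p' <= count_steps f x p].
Proof.
suff H n : size p <= n -> path e x p -> exists p', [/\ path e x p',
    uniq (x :: p'), last x p' = last x p &
    forall f, count_steps f x p' <= count_steps f x p].
  exact: H (leqnn _).
elim: n x p => [|n IH] x p size_p ep.
  by case: p size_p ep => // _ _; exists [::].
have [up|/(uniqPn x) [i [j [lt_ij lt_j Eij]]]] := boolP (uniq (x :: p)).
  by exists p.
have le_jp : j <= size p by [].
have [Ep L1 L2] := take_drop_split3 x (ltnW lt_ij) le_jp.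
set p1 := take i p in Ep L1 L2; set p2 := take _ _ in Ep L2.
set p3 := drop j p in Ep.
have size13 : size (p1 ++ p3) <= n.
  rewrite size_cat size_take size_drop.
  by move: size_p lt_ij le_jp; case: (ltnP i (size p)) => /=; lia.
move: (ep); rewrite {1}Ep !cat_path L1 L2 => /and3P[ep1 _ ep3].
have ep13 : path e x (p1 ++ p3) by rewrite cat_path ep1 L1 Eij.
have [p' [ep' up' lastp' countp']] := IH x _ size13 ep13.
exists p'; split => //; first by rewrite lastp' Ep !last_cat L1 L2 Eij.
move=> f; apply: leq_trans (countp' f) _.
by rewrite Ep !count_steps_cat L1 L2 -Eij leq_add2l leq_addl.
Qed.

Lemma path_connect_last (A : finType) (e : rel A) x c :
  path e x c -> connect e x (last x c).
Proof. by move=> ec; apply/connectP; exists c. Qed.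

Section PosetFacts.
Context {disp : Order.disp_t} {T : finPOrderType disp}.
Local Open Scope order_scope.
Implicit Types u v w x y z : T.

Lemma covers_lt x y : covers x y -> x < y.
Proof. by case/andP. Qed.

Lemma covers_asym x y : covers x y -> ~~ covers y x.
Proof.
move=> /covers_lt lt_xy; apply/negP => /covers_lt lt_yx.
by move: (lt_trans lt_xy lt_yx); rewrite ltxx.
Qed.

Lemma lt_between x y : x < y -> ~~ covers x y -> exists w, x < w < y.
Proof.
by move=> lt_xy; rewrite /covers lt_xy => /forallPn [w]; rewrite negbK; exists w.
Qed.

Lemma lt_covers_ind (P : T -> T -> Prop) :
  (forall x y, covers x y -> P x y) ->
  (forall x w y, x < w -> w < y -> P x w -> P w y -> P x y) ->
  forall x y, x < y -> P x y.
Proof.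
move=> Pcov Ptrans.
suff H n x y : (#|[set w | (x < w < y)%O]| <= n)%N -> x < y -> P x y.
  by move=> x y; apply: H (leqnn _).
elim: n x y => [|n IH] x y card_xy lt_xy.
- have [cov|/(lt_between lt_xy) [w xwy]] := boolP (covers x y); first exact: Pcov.
  by move: card_xy; rewrite leqn0 cards_eq0 => /eqP/setP/(_ w); rewrite !inE xwy.
- have [cov|/(lt_between lt_xy) [w /andP[lt_xw lt_wy]]] := boolP (covers x y).
    exact: Pcov.
  apply: (Ptrans x w y lt_xw lt_wy); [apply: (IH x w)|apply: (IH w y)] => //.
  + rewrite -ltnS; apply: leq_trans card_xy; apply: proper_card; apply/properP.
    split; last by exists w; rewrite !inE ?lt_xw ?lt_wy ?ltxx ?andbF.
    by apply/subsetP => u; rewrite !inE => /andP[-> /lt_trans ->].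
  + rewrite -ltnS; apply: leq_trans card_xy; apply: proper_card; apply/properP.
    split; last by exists w; rewrite !inE ?lt_xw ?lt_wy ?ltxx.
    by apply/subsetP => u; rewrite !inE => /andP[/(lt_trans lt_xw) -> ->].
Qed.

(* Minimal and maximal elements are extremal for [<] and its converse. *)
Lemma exists_extremal (lt : rel T) :
  irreflexive lt -> transitive lt ->
  forall y, exists x, [forall z, ~~ lt z x] && ((x == y) || lt x y).
Proof.
move=> ltxx' lt_trans'.
suff H n y : (#|[set w | lt w y]| <= n)%N ->
    exists x, [forall z, ~~ lt z x] && ((x == y) || lt x y).
  by move=> y; apply: H (leqnn _).
elim: n y => [|n IH] y card_y.
  exists y; rewrite eqxx andbT; apply/forallP => z; apply/negP => lt_zy.
  by move: card_y; rewrite leqn0 cards_eq0 => /eqP/setP/(_ z); rewrite !inE lt_zy.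
have [ext_y|/forallPn [z]] := boolP [forall z, ~~ lt z y].
  by exists y; rewrite ext_y eqxx.
rewrite negbK => lt_zy.
have lt_card : (#|[set w | lt w z]| <= n)%N.
  rewrite -ltnS; apply: leq_trans card_y; apply: proper_card; apply/properP.
  split; last by exists z; rewrite !inE ?lt_zy ?ltxx'.
  by apply/subsetP => u; rewrite !inE => /lt_trans' ->.
have [x /andP[ext_x x_le_z]] := IH z lt_card.
exists x; rewrite ext_x /=; apply/orP; right.
by case/orP: x_le_z => [/eqP->|lt_xz] //; apply: lt_trans' lt_xz lt_zy.
Qed.

Lemma exists_minimal_le y : exists x, minimalb x && (x <= y).
Proof.
have [x /andP[min_x xy]] := exists_extremal (@ltxx _ T) (@lt_trans _ T) y.
by exists x; rewrite /minimalb min_x le_eqVlt.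
Qed.

Lemma exists_maximal_ge y : exists x, maximalb x && (y <= x).
Proof.
have gtxx : irreflexive (fun a b : T => b < a) by move=> a; rewrite ltxx.
have gt_trans : transitive (fun a b : T => b < a).
  by move=> a b c lt_ab lt_bc; apply: lt_trans lt_bc lt_ab.
have [x /andP[max_x xy]] := exists_extremal gtxx gt_trans y.
by exists x; rewrite /maximalb max_x le_eqVlt eq_sym.
Qed.

Lemma covers_chain_up (e : rel T) u v :
  (forall w w', u <= w -> w' <= v -> covers w w' -> e w w') -> u <= v ->
  exists c, path e u c /\ last u c = v.
Proof.
move=> e_cov; rewrite le_eqVlt => /orP[/eqP <-|lt_uv]; first by exists [::].
elim/lt_covers_ind: u v / lt_uv e_cov => [x y cov_xy|x w y lt_xw lt_wy IH1 IH2] e_cov.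
  by exists [:: y]; rewrite /= andbT e_cov.
have [c1 [ec1 Lc1]] : exists c, path e x c /\ last x c = w.
  by apply: IH1 => a b xa bw; apply: e_cov; rewrite // (le_trans bw) ?ltW.
have [c2 [ec2 Lc2]] : exists c, path e w c /\ last w c = y.
  by apply: IH2 => a b wa bv; apply: e_cov; rewrite // (le_trans _ wa) ?ltW.
by exists (c1 ++ c2); rewrite cat_path last_cat Lc1 ec1 ec2.
Qed.

Lemma covers_chain_down u v : v <= u ->
  exists c, path (fun a b => covers b a) u c /\ last u c = v.
Proof.
rewrite le_eqVlt => /orP[/eqP ->|lt_vu]; first by exists [::].
elim/lt_covers_ind: v u / lt_vu
  => [x y cov_xy|x w y _ _ [c1 [ec1 Lc1]] [c2 [ec2 Lc2]]].
  by exists [:: x]; rewrite /= andbT.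
by exists (c2 ++ c1); rewrite cat_path last_cat Lc2 ec1 ec2.
Qed.

Lemma lenstar_cons (x : T) p : lenstar (x :: p) = count_steps covers x p.
Proof. by rewrite /lenstar /=; elim: p x => [|y p IH] x //=; rewrite -IH. Qed.

End PosetFacts.

Lemma count_iotaS (P : pred nat) n :
  count P (iota 0 n.+1) = count P (iota 0 n) + P n.
Proof. by rewrite -[n.+1]addn1 iotaD count_cat /= addn0. Qed.

Lemma count_iota_leq (P : pred nat) m n :
  m <= n -> count P (iota 0 m) <= count P (iota 0 n).
Proof. by move=> le_mn; rewrite -(subnKC le_mn) iotaD count_cat leq_addr. Qed.

Lemma nth_filter_iota (P : pred nat) t k : k < size (filter P (iota 0 t)) ->
  let j := nth 0 (filter P (iota 0 t)) k in
  [/\ j < t, P j & count P (iota 0 j) = k].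
Proof.
elim: t k => [|t IH] k //.
rewrite -[t.+1]addn1 iotaD filter_cat size_cat nth_cat /= add0n.
case: (ltnP k (size (filter P (iota 0 t)))) => [lt_k _|le_k].
  by have [? ? ?] := IH k lt_k; split; rewrite // addn1 ltnS ltnW.
case Pt: (P t) => /= lt_k; last by lia.
have -> : k - size (filter P (iota 0 t)) = 0 by lia.
by split => //=; rewrite ?addn1 // -size_filter; lia.
Qed.

Lemma ltnatE (m n : nat) : (m < n)%O = (m < n). Proof. by []. Qed.
Lemma lenatE (m n : nat) : (m <= n)%O = (m <= n). Proof. by []. Qed.

Section PathBlocks.
Context {disp : Order.disp_t} {T : finPOrderType disp}.
Variables (x0 : T) (s : seq T).
Local Notation t := (size s).
Local Notation q := (q x0 s).
Local Notation up := (upstep x0 s).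
Local Notation dn := (downstep x0 s).
Local Notation M := (maxs x0 s).
Local Notation N := (mins x0 s).
Hypothesis steps_s : forall j, j.+1 < t -> up j || dn j.
Hypothesis min_q0 : minimalb (q 0).
Hypothesis last_up : 1 < t -> up (t - 2).

Lemma upstep_downstep j : up j -> ~~ dn j.
Proof. exact: covers_asym. Qed.

Lemma upstep0 : 1 < t -> up 0.
Proof.
move=> lt1t; case/orP: (steps_s lt1t) => // dn0.
by move: min_q0 => /forallP /(_ (q 1)); rewrite (covers_lt dn0).
Qed.

(* Before an interior position, local minima and maxima alternate. *)
Lemma count_locmin_locmax j : 0 < j -> j < t ->
  count (locmin x0 s) (iota 0 j) = count (locmax x0 s) (iota 0 j) + up j.-1.
Proof.
elim: j => [|[|j] IH] // _ lt_jt.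
  by rewrite /= /locmin /locmax !ltnatE /= upstep0 //; case: t lt_jt => [|[]].
rewrite count_iotaS [in RHS]count_iotaS IH // ?(ltnW lt_jt) //=.
have lt_jt1 : j.+1 < t.-1 by lia.
rewrite /locmin /locmax !ltnatE lt_jt1 /= (_ : j.+1 == t.-1 = false); last first.
  by apply/negbTE; lia.
have := steps_s (ltnW lt_jt); have := steps_s lt_jt.
have := @upstep_downstep j; have := @upstep_downstep j.+1.
by case: (up j); case: (dn j); case: (up j.+1); case: (dn j.+1) => //=; lia.
Qed.

Lemma size_mins : 1 < t -> size N = size M.
Proof.
move=> lt1t; rewrite !size_filter -(ltn_predK lt1t) !count_iotaS.
rewrite count_locmin_locmax ?(ltn_predK lt1t) //; last by lia.
rewrite (_ : (t.-1).-1 = t - 2); last by lia.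
rewrite last_up // /locmin /locmax !ltnatE eqxx ltnn /= andbF.
have -> : (t.-1 == 0) = false by apply/negbTE; lia.
by rewrite addn0.
Qed.

Lemma nth_maxs b : b < size M ->
  [/\ nth 0 M b < t, locmax x0 s (nth 0 M b)
    & count (locmax x0 s) (iota 0 (nth 0 M b)) = b].
Proof. exact: nth_filter_iota. Qed.

Lemma nth_mins b : b < size N ->
  [/\ nth 0 N b < t, locmin x0 s (nth 0 N b)
    & count (locmin x0 s) (iota 0 (nth 0 N b)) = b].
Proof. exact: nth_filter_iota. Qed.

Lemma nth_maxs_interior b : b.+1 < size M ->
  [/\ 0 < nth 0 M b, nth 0 M b < t.-1, up (nth 0 M b).-1 & dn (nth 0 M b)].
Proof.
move=> lt_b; have [lt_t + count_b] := nth_maxs (ltnW lt_b).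
rewrite /locmax !ltnatE; case/orP => [/eqP Et|/and4P[]//].
move: lt_b; rewrite size_filter -(ltn_predK lt_t) count_iotaS -Et count_b.
by case: (locmax x0 s _); lia.
Qed.

Lemma nth_maxs_mono m b : m < b -> b < size M -> nth 0 M m < nth 0 M b.
Proof.
move=> lt_mb lt_b; have [_ _ cb] := nth_maxs lt_b.
have [_ _ cm] := nth_maxs (ltn_trans lt_mb lt_b).
rewrite ltnNge; apply/negP => /(count_iota_leq (locmax x0 s)).
by rewrite cb cm; lia.
Qed.

Lemma nth_mins_next b : b.+1 < size M ->
  nth 0 M b < nth 0 N b.+1 /\ up (nth 0 N b.+1).
Proof.
move=> lt_b; have [y_gt0 y_lt up_y dn_y] := nth_maxs_interior lt_b.
have [_ _ count_y] := nth_maxs (ltnW lt_b).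
have lt_bN : b.+1 < size N by rewrite size_mins //; lia.
have [_ min_z count_z] := nth_mins lt_bN.
set y := nth 0 M b in y_gt0 y_lt up_y dn_y count_y *.
set z := nth 0 N b.+1 in min_z count_z *.
have count_min_y := @count_locmin_locmax y y_gt0 (leq_trans y_lt (leq_pred _)).
have lt_yz : y < z.
  rewrite ltnNge leq_eqVlt; apply/negP => /orP[/eqP Ezy|lt_zy].
    have y_neq0 : (y == 0) = false by apply/negbTE; lia.
    move: min_z; rewrite /locmin !ltnatE Ezy y_neq0 /=.
    by case/and4P => _ _ /(negP (upstep_downstep up_y)).
  have := count_iota_leq (locmin x0 s) lt_zy.
  by rewrite count_iotaS count_z min_z count_min_y count_y up_y; lia.
have z_neq0 : (z == 0) = false by apply/negbTE; lia.
by split => //; move: min_z; rewrite /locmin !ltnatE z_neq0 => /and4P[].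
Qed.

(* A failure of condition (1) or (2) exhibits an element of the path lying
   below an earlier one, with an up-step in between. *)
Definition descent i j k := [/\ i < j, j < t, (q j <= q i)%O, i <= k < j & up k].

Lemma not_cond1_descent b : uniq s -> b.+1 < size M -> ~~ cond1 x0 s b ->
  exists i j k, descent i j k.
Proof.
move=> uniq_s lt_b; have [y_gt0 _ up_y _] := nth_maxs_interior lt_b.
have [y_lt _ _] := nth_maxs (ltnW lt_b).
rewrite /cond1 disjoint_subset => /subsetPn [z].
rewrite !inE negbK => /hasP [j]; rewrite mem_iota add0n => /andP[_ lt_jt].
rewrite /inD ltnatE lenatE => /andP[/andP[lt_yj _] /eqP Eqj].
case/orP => [/orP[/bigcupP [m _]|/hasP [i]]|]; rewrite ?inE.
- move=> le_zm; have lt_mb := nth_maxs_mono (ltn_ord m) (ltnW lt_b).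
  exists (nth 0 M m), j, (nth 0 M b).-1.
  by split; rewrite // ?Eqj //; lia.
- rewrite mem_iota add0n /inA ltnatE lenatE => /andP[_ lt_it].
  case/and3P => /andP[_ le_iy] ne_iy le_zi.
  exists i, j, (nth 0 M b).-1.
  by split; rewrite // ?Eqj //; lia.
- move=> /eqP Ez; have := nth_uniq x0 lt_jt y_lt uniq_s.
  rewrite -[nth x0 s j]/(q j) Eqj Ez eqxx => /esym/eqP Ejy.
  by move: lt_yj; rewrite Ejy ltnn.
Qed.

Lemma not_cond2_descent b : b.+1 < size M -> ~~ cond2 x0 s b ->
  exists i j k, descent i j k.
Proof.
move=> lt_b; rewrite /cond2 disjoint_subset => /subsetPn [z].
rewrite !inE negbK => /hasP [j]; rewrite mem_iota add0n => /andP[_ lt_jt].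
rewrite /inA ltnatE lenatE /= => /andP[/andP[lt_zj _] /eqP Eqj] /bigcupP [m _].
rewrite inE => le_zm.
have [lt_yz up_z] := nth_mins_next lt_b.
have le_mb : nth 0 M m <= nth 0 M b.
  have := ltn_ord m; rewrite ltnS leq_eqVlt => /orP[/eqP -> //|lt_mb].
  exact/ltnW/(nth_maxs_mono lt_mb (ltnW lt_b)).
exists (nth 0 M m), j, (nth 0 N b.+1).
by split; rewrite // ?Eqj //; lia.
Qed.

Lemma not_star_descent : uniq s -> ~~ star x0 s -> exists i j k, descent i j k.
Proof.
move=> uniq_s /allPn [b]; rewrite mem_iota add0n /nblocks => /andP[_ lt_b].
have {}lt_b : b.+1 < size M by lia.
rewrite negb_and => /orP[].
  exact: not_cond1_descent.
exact: not_cond2_descent.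
Qed.

End PathBlocks.

Section AllowedPaths.
Context {disp : Order.disp_t} {T : finPOrderType disp}.
Variables (a : T -> nat) (r Q : nat).
Hypothesis a_anti : forall x y : T, (x <= y)%O -> a y <= a x.

Definition high (y : T) := r - Q < a y.

Definition allowed : rel T :=
  fun u v => covers v u || (covers u v && (high v || (a u < a v + Q))).

Definition costly : rel T := fun u v => covers u v && ~~ high v.

Definition obstruction (x : T) (p : seq T) :=
  [&& minimalb x, high x, path allowed x p, a (last x p) < Q
    & maximalb (last x p)].

Lemma capped_weight_path x p : path allowed x p ->
  minn (a x) (r - Q).+1 <=
    minn (a (last x p)) (r - Q).+1 + (Q - 1) * count_steps costly x p.
Proof.
elim: p x => [|y p IH] x /=; first by rewrite muln0 addn0.
case/andP => step_xy /IH {IH}.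
suff : minn (a x) (r - Q).+1 <= minn (a y) (r - Q).+1 + (Q - 1) * costly x y.
  by lia.
move: step_xy; rewrite /allowed /costly /high.
have [cov_yx _|_ /= /andP[cov_xy]] := boolP (covers y x).
  rewrite (negbTE (covers_asym cov_yx)) /=.
  by have := a_anti (ltW (covers_lt cov_yx)); lia.
by rewrite cov_xy; case: ltnP => /=; lia.
Qed.

Lemma obstruction_costly x p rk : obstruction x p ->
  (rk + 2) * (Q - 1) + 1 <= r -> rk < count_steps costly x p.
Proof.
case/and5P => _ high_x /capped_weight_path + last_lt _ le_r.
rewrite ltnNge; apply/contraL => le_costly.
have : (Q - 1) * count_steps costly x p <= (Q - 1) * rk.
  by rewrite leq_mul2l le_costly orbT.
move: high_x last_lt le_r; rewrite /high; nia.
Qed.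

(* A descent q_j <= q_i (i < j) can be bypassed by a chain of down-covers,
   which removes the up-cover at position k. *)
Lemma allowed_shortcut x p i j k : path allowed x p -> descent x (x :: p) i j k ->
  exists p', [/\ path allowed x p', last x p' = last x p
               & count_steps covers x p' < count_steps covers x p].
Proof.
move=> ep [lt_ij lt_j le_ji /andP[le_ik lt_kj] up_k].
have le_jp : j <= size p by [].
have [Ep L1 L2] := take_drop_split3 x (ltnW lt_ij) le_jp.
set p1 := take i p in Ep L1 L2; set p2 := take _ _ in Ep L2.
set p3 := drop j p in Ep.
have [c [down_c Lc]] := covers_chain_down le_ji.
move: (ep); rewrite {1}Ep !cat_path L1 L2 => /and3P[ep1 _ ep3].
exists (p1 ++ c ++ p3); split.
- rewrite !cat_path ep1 L1 Lc ep3 andbT /=.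
  by apply: sub_path down_c => u v cov; rewrite /allowed cov.
- by rewrite {1}Ep !last_cat L1 Lc L2.
rewrite {1}Ep !count_steps_cat L1 L2 Lc ltn_add2l ltn_add2r.
rewrite (count_steps_eq0 down_c); last by move=> u v /covers_asym.
have size_p2 : size p2 = j - i.
  by rewrite /p2 size_takel // size_drop leq_sub2r.
apply: (@count_steps_gt0 _ _ _ _ (k - i)); first by rewrite size_p2; lia.
have lt_ip : i < size (x :: p) by rewrite /= ltnS (leq_trans (ltnW lt_ij)).
have -> : nth x (x :: p) i :: p2 = take (j - i).+1 (drop i (x :: p)).
  by rewrite (drop_nth x lt_ip).
rewrite nth_take ?nth_drop ?subnKC //; last by lia.
rewrite /p2 nth_take ?nth_drop ?subnKC //; last by lia.
have lt_kp : k < size p by apply: leq_trans lt_kj _.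
rewrite [nth _ (x :: p) k](set_nth_default x); last by rewrite /= ltnW.
by rewrite [nth _ p k](set_nth_default x).
Qed.

End AllowedPaths.

Section FrobeniusIdeal.
Context {disp : Order.disp_t} {T : finPOrderType disp}.
Implicit Types u v w x y z : T.

Lemma lenstar_le_rankstar (s : seq T) : good_path s -> uniq s ->
  lenstar s <= rankstar (T := T).
Proof.
move=> good_s uniq_s.
have lt_s : size s < #|T|.+1 by rewrite ltnS -(card_uniqP uniq_s) max_card.
apply: leq_trans (@leq_bigmax_cond _ (fun u : (size s).-tuple T => good_path u)
  (fun tu => lenstar tu) (in_tuple s) good_s) _.
exact: (@leq_bigmax _ (fun k : 'I_#|T|.+1 =>
   \max_(u : k.-tuple T | good_path u) lenstar u) (Ordinal lt_s)).
Qed.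

Variables (a : T -> nat) (r Q : nat).
Hypothesis a_anti : forall x y : T, (x <= y)%O -> a y <= a x.
Hypothesis r_large : (rankstar (T := T) + 2) * (Q - 1) + 1 <= r.

Local Notation allowed := (allowed a r Q).
Local Notation high := (high a r Q).
Local Notation obstruction := (obstruction a r Q).

Lemma allowed_steps x p : path allowed x p ->
  forall j, j.+1 < size (x :: p) -> upstep x (x :: p) j || downstep x (x :: p) j.
Proof.
move=> /(pathP x) ep j /ep; rewrite /allowed /upstep /downstep /q /=.
by case/orP => [->|/andP[-> _]]; rewrite ?orbT.
Qed.

Lemma obstruction_last_upstep x p : obstruction x p -> 1 < size (x :: p) ->
  upstep x (x :: p) (size (x :: p) - 2).
Proof.
case/and5P => _ _ ep _ max_last; rewrite /= subSS subn1 => p_gt0.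
have := allowed_steps ep (j := (size p).-1); rewrite /= prednK //.
case/(_ (ltnSn _))/orP => [//|]; rewrite /downstep prednK // => /covers_lt.
have -> : q x (x :: p) (size p) = last x p.
  by rewrite /q -[size p]/(size (x :: p)).-1 nth_last.
move=> lt_last; move: max_last => /forallP/(_ (q x (x :: p) (size p).-1)).
by rewrite lt_last.
Qed.

Lemma obstruction_good_path x p : obstruction x p -> uniq (x :: p) ->
  star x (x :: p) -> good_path (x :: p).
Proof.
move=> obs uniq_p star_p; have /and5P[min_x _ ep _ max_last] := obs.
rewrite /good_path /is_maximal_path star_p andbT.
apply/andP; split; last by rewrite /q nth_last.
rewrite /is_path uniq_p min_x /=; apply/andP; split.
  by apply/allP => j; rewrite mem_iota add0n => /andP[_]; apply: allowed_steps.
by apply/implyP => /(obstruction_last_upstep obs); rewrite /= subSS.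
Qed.

Lemma obstruction_improve x p : obstruction x p ->
  (exists p', obstruction x p' && good_path (x :: p')) \/
  (exists p', obstruction x p' /\ count_steps covers x p' < count_steps covers x p).
Proof.
case/and5P=> min_x high_x ep last_lt max_last.
have [p1 [ep1 uniq_p1 last_p1 count_p1]] := path_remove_loops ep.
have obs1 : obstruction x p1.
  by rewrite /obstruction min_x high_x ep1 last_p1 last_lt.
have [star_p1|not_star] := boolP (star x (x :: p1)).
  by left; exists p1; rewrite obs1 (obstruction_good_path obs1 uniq_p1 star_p1).
have [i [j [k desc]]] := not_star_descent (allowed_steps ep1) min_x
  (obstruction_last_upstep obs1) uniq_p1 not_star.
have [p2 [ep2 last_p2 count_p2]] := allowed_shortcut ep1 desc.
right; exists p2; split; last exact: leq_trans count_p2 (count_p1 _).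
by rewrite /obstruction min_x high_x ep2 last_p2 last_p1 last_lt.
Qed.

(* A good obstruction would have more than rank^* P up-steps. *)
Lemma no_obstruction x p : ~ obstruction x p.
Proof.
move=> obs.
suff [p' /andP[obs' good]] : exists p', obstruction x p' && good_path (x :: p').
  have uniq_p' : uniq (x :: p') by case/andP: good => /andP[/and5P[]].
  have := obstruction_costly a_anti obs' r_large.
  have := count_steps_sub x p' (fun u v (c : costly a r Q u v) => proj1 (andP c)).
  by have := lenstar_le_rankstar good uniq_p'; rewrite lenstar_cons; lia.
move: (ltnSn (count_steps covers x p)) obs; move: {-1}(count_steps _ _ _).+1 => n.
elim: n p => [|n IH] p lt_n obs //.
case: (obstruction_improve obs) => [//|[p' [obs' lt_p']]].
by apply: IH obs'; apply: leq_trans lt_p' _.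
Qed.

Definition frob_ideal : {set T} :=
  [set y | [exists x, [&& minimalb x, high x & connect allowed x y]]].

Lemma frob_ideal_connect y z : y \in frob_ideal -> connect allowed y z ->
  z \in frob_ideal.
Proof.
rewrite !inE => /existsP [x /and3P[min_x high_x conn_xy]] conn_yz.
by apply/existsP; exists x; rewrite min_x high_x (connect_trans conn_xy conn_yz).
Qed.

Lemma frob_ideal_down y z : y \in frob_ideal -> (z <= y)%O -> z \in frob_ideal.
Proof.
move=> Jy /covers_chain_down [c [down_c <-]].
apply: frob_ideal_connect Jy (path_connect_last _).
by apply: sub_path down_c => u v cov; rewrite /allowed cov.
Qed.

Lemma high_in_frob_ideal y : high y -> y \in frob_ideal.
Proof.
move=> high_y; have [m /andP[min_m le_my]] := exists_minimal_le y.
have high_m : high m by move: high_y; rewrite /high; have := a_anti le_my; lia.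
have allowed_up w w' : (m <= w)%O -> (w' <= y)%O -> covers w w' -> allowed w w'.
  move=> _ le_w'y cov; apply/orP; right; rewrite cov; apply/orP; left.
  by have := a_anti le_w'y; move: high_y; rewrite /high; lia.
have [c [up_c <-]] := covers_chain_up allowed_up le_my.
rewrite inE; apply/existsP; exists m; rewrite min_m high_m.
exact: path_connect_last.
Qed.

Lemma frob_ideal_ge y : y \in frob_ideal -> Q <= a y.
Proof.
rewrite leqNgt => Jy; apply/negP => lt_yQ.
have [m /andP[max_m le_ym]] := exists_maximal_ge y.
have allowed_up w w' : (y <= w)%O -> (w' <= m)%O -> covers w w' -> allowed w w'.
  move=> le_yw _ cov; apply/orP; right; rewrite cov; apply/orP; right.
  by have := a_anti le_yw; lia.
have [c [up_c last_c]] := covers_chain_up allowed_up le_ym.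
move: Jy; rewrite inE => /existsP [x /and3P[min_x high_x conn_xy]].
have /connectP [p ep last_p] := connect_trans conn_xy (path_connect_last up_c).
apply: (@no_obstruction x p).
rewrite /obstruction min_x high_x ep -last_p last_c max_m andbT /=.
by have := a_anti le_ym; lia.
Qed.

Lemma frob_ideal_cover_gap u v : covers u v -> u \in frob_ideal ->
  v \notin frob_ideal -> a v + Q <= a u.
Proof.
move=> cov Ju; apply: contraR; rewrite -ltnNge => lt_u.
apply: frob_ideal_connect Ju (connect1 _).
by apply/orP; right; rewrite cov lt_u orbT.
Qed.

(* The gap [a v + Q <= a u] across covers propagates along chains, since
   [a] is antitone inside and outside J. *)
Lemma frob_ideal_gap x y : (x < y)%O -> x \in frob_ideal ->
  y \notin frob_ideal -> a y + Q <= a x.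
Proof.
move=> lt_xy; elim/(@lt_covers_ind _ T): x y / lt_xy
  => [x y|x w y lt_xw lt_wy IH1 IH2 Jx Jy].
  exact: frob_ideal_cover_gap.
have [Jw|Jw] := boolP (w \in frob_ideal).
  exact: leq_trans (IH2 Jw Jy) (a_anti (ltW lt_xw)).
by have := IH1 Jx Jw; have := a_anti (ltW lt_wy); lia.
Qed.

Lemma frob_ideal_is_poset_ideal : is_poset_ideal frob_ideal.
Proof.
apply/forallP => x; apply/forallP => y; apply/implyP => /andP[le_yx Jx].
exact: frob_ideal_down Jx le_yx.
Qed.

Lemma notin_frob_ideal_le y : y \notin frob_ideal -> a y <= r - Q.
Proof. by apply: contraR; rewrite -ltnNge; apply: high_in_frob_ideal. Qed.

Lemma sub_frob_ideal_anti x y : (x <= y)%O ->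
  a y - Q * (y \in frob_ideal) <= a x - Q * (x \in frob_ideal).
Proof.
move=> le_xy; have a_xy := a_anti le_xy.
have [Jy|Jy] := boolP (y \in frob_ideal).
  by rewrite (frob_ideal_down Jy le_xy) /=; lia.
have [Jx|Jx] := boolP (x \in frob_ideal); last by rewrite /= !muln0 !subn0.
have lt_xy : (x < y)%O.
  by rewrite lt_neqAle le_xy andbT; apply: contraNneq Jy => <-.
by have := frob_ideal_gap lt_xy Jx Jy; rewrite /=; lia.
Qed.

End FrobeniusIdeal.

Section HibiRing.
Context {disp : Order.disp_t} {T : finPOrderType disp} {K : fieldType}.
Local Notation PR := {mpoly K[#|T|.+1]}.
Local Notation ideal_gen := (@ideal_gen _ T K).
Local Open Scope ring_scope.
Implicit Types (S : PR -> Prop) (f g h : PR) (L : seq {set T}).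

Lemma inHibi1 : inHibi (1 : PR).
Proof. by rewrite -mpolyC1; apply: inHibi_const. Qed.

Lemma ideal_gen0 S : ideal_gen S 0.
Proof. by exists [::]; split => //; rewrite big_nil. Qed.

Lemma ideal_genD S f g : ideal_gen S f -> ideal_gen S g -> ideal_gen S (f + g).
Proof.
move=> [l1 [S1 ->]] [l2 [S2 ->]]; exists (l1 ++ l2); split; last by rewrite big_cat.
by move=> pr; rewrite mem_cat => /orP[/S1|/S2].
Qed.

Lemma ideal_genMl S h f : inHibi h -> ideal_gen S f -> ideal_gen S (h * f).
Proof.
move=> Rh [l [Sl ->]]; exists [seq (h * pr.1, pr.2) | pr <- l]; split.
  move=> _ /mapP [pr l_pr ->] /=; have [R1 S2] := Sl _ l_pr.
  by split => //; apply: inHibi_mul.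
by rewrite big_map mulr_sumr; apply: eq_bigr => pr _; rewrite mulrA.
Qed.

Lemma ideal_gen_sub S g : S g -> ideal_gen S g.
Proof.
move=> Sg; exists [:: (1, g)]; split; last by rewrite big_seq1 mul1r.
by move=> pr; rewrite inE => /eqP -> /=; split => //; apply: inHibi1.
Qed.

Lemma ideal_gen_sum S (I : eqType) (l : seq I) (F : I -> PR) :
  (forall i, i \in l -> ideal_gen S (F i)) -> ideal_gen S (\sum_(i <- l) F i).
Proof.
elim: l => [|i l IH] SF; first by rewrite big_nil; apply: ideal_gen0.
rewrite big_cons; apply: ideal_genD; first by apply: SF; rewrite mem_head.
by apply: IH => j l_j; apply: SF; rewrite inE l_j orbT.
Qed.

Lemma ideal_gen_trans S S' f : (forall g, S g -> ideal_gen S' g) ->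
  ideal_gen S f -> ideal_gen S' f.
Proof.
move=> SS' [l [Sl ->]]; apply: ideal_gen_sum => pr l_pr.
by have [R1 S2] := Sl _ l_pr; apply: ideal_genMl R1 (SS' _ S2).
Qed.

Definition hibi_prod L : PR := \prod_(I <- L) hibi_gen I.

Definition hibi_prod_ge n g :=
  exists L, [/\ (n <= size L)%N, all is_poset_ideal L & g = hibi_prod L].

Definition hibi_mono L : 'X_{1.. #|T|.+1} :=
  (\sum_(I <- L) (U_(ord0) + \sum_(x in I) U_(varX x)))%MM.

Lemma mpolyX_big (I : Type) (l : seq I) (P : pred I) (F : I -> 'X_{1.. #|T|.+1}) :
  'X_[(\sum_(i <- l | P i) F i)%MM] = \prod_(i <- l | P i) ('X_[F i] : PR).
Proof. exact: (big_morph (fun m => 'X_[m] : PR) (@mpolyXD _ _) (@mpolyX0 _ _)). Qed.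

Lemma hibi_prodE L : hibi_prod L = 'X_[hibi_mono L].
Proof.
rewrite /hibi_prod /hibi_mono mpolyX_big; apply: eq_bigr => I _.
by rewrite mpolyXD mpolyX_big.
Qed.

Lemma hibi_prod_cat L1 L2 : hibi_prod (L1 ++ L2) = hibi_prod L1 * hibi_prod L2.
Proof. exact: big_cat. Qed.

Lemma hibi_prod1 I : hibi_prod [:: I] = hibi_gen I.
Proof. exact: big_seq1. Qed.

Lemma inHibi_prod L : all is_poset_ideal L -> inHibi (hibi_prod L).
Proof.
elim: L => [|I L IH] /=; first by rewrite /hibi_prod big_nil => _; apply: inHibi1.
by case/andP => ideal_I /IH; rewrite /hibi_prod big_cons; apply/inHibi_mul/inHibi_gen.
Qed.

Lemma varX_neq0 (x : T) : (varX x == ord0) = false.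
Proof. by rewrite eq_sym; apply/negbTE/neq_lift. Qed.

Lemma varX_eq (x y : T) : (varX y == varX x) = (y == x).
Proof. by rewrite /varX (inj_eq lift_inj) (inj_eq enum_rank_inj). Qed.

Lemma hibi_mono0 L : hibi_mono L ord0 = size L.
Proof.
rewrite /hibi_mono mnm_sumE -sum1_size; apply: eq_bigr => I _.
rewrite mnmDE mnm1E eqxx mnm_sumE big1 // => x _.
by rewrite mnm1E varX_neq0.
Qed.

Lemma hibi_mono_varX L (x : T) :
  hibi_mono L (varX x) = count (fun I : {set T} => x \in I) L.
Proof.
rewrite /hibi_mono mnm_sumE; elim: L => [|I L IH]; first by rewrite big_nil.
rewrite big_cons IH /= mnmDE mnm1E eq_sym varX_neq0 add0n; congr (_ + _)%N.
rewrite mnm_sumE; have [I_x|notI_x] := boolP (x \in I).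
  rewrite (bigD1 x) //= mnm1E eqxx big1 // => y /andP[_ ne_yx].
  by rewrite mnm1E varX_eq (negbTE ne_yx).
rewrite big1 // => y I_y; rewrite mnm1E varX_eq.
by apply/eqP; rewrite eqb0; apply: contraNneq notI_x => <-.
Qed.

Lemma mcoeff0M f g : mcoeff 0%MM (f * g) = mcoeff 0%MM f * mcoeff 0%MM g.
Proof. exact: (mcoeff0_is_multiplicative _ _).1. Qed.

Lemma mcoeff0_hibi_prod L : (0 < size L)%N -> mcoeff 0%MM (hibi_prod L) = 0.
Proof.
move=> L_gt0; rewrite hibi_prodE mcoeffX; case: eqP => // E.
by move: L_gt0; rewrite -hibi_mono0 E mnm0E.
Qed.

Lemma mcoeff0_ideal f : ideal_gen (hibi_prod_ge 1) f -> mcoeff 0%MM f = 0.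
Proof.
move=> [l [Sl ->]].
rewrite (big_morph (mcoeff 0%MM) (@mcoeffD _ _ _) (@mcoeff0 _ _ _)).
rewrite big1_seq // => pr /andP[_ l_pr].
have [_ [L [L_gt0 _ ->]]] := Sl _ l_pr.
by rewrite mcoeff0M mcoeff0_hibi_prod // mulr0.
Qed.

Lemma inHibi_decomp f : inHibi f -> exists c, ideal_gen (hibi_prod_ge 1) (f - c%:MP).
Proof.
elim => [I ideal_I|c|f1 g1 _ [c1 I1] _ [c2 I2]|f1 g1 _ [c1 I1] R_g1 [c2 I2]].
- exists 0; rewrite mpolyC0 subr0; apply: ideal_gen_sub.
  by exists [:: I]; rewrite /= ideal_I hibi_prod1.
- by exists c; rewrite subrr; apply: ideal_gen0.
- exists (c1 + c2); rewrite mpolyCD.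
  rewrite (_ : _ - _ = (f1 - c1%:MP) + (g1 - c2%:MP)); last by ring.
  exact: ideal_genD.
- exists (c1 * c2); rewrite mpolyCM.
  rewrite (_ : _ - _ = g1 * (f1 - c1%:MP) + c1%:MP * (g1 - c2%:MP)); last by ring.
  by apply: ideal_genD; apply: ideal_genMl => //; apply: inHibi_const.
Qed.

Lemma in_m_ideal x : in_m x -> ideal_gen (hibi_prod_ge 1) x.
Proof.
case=> Rx m_x; have [c Ic] := inHibi_decomp Rx.
suff c0 : c = 0 by move: Ic; rewrite c0 mpolyC0 subr0.
have := m_x 0%MM (mnm0E _); rewrite -(subrK c%:MP x) mcoeffD (mcoeff0_ideal Ic).
by rewrite mcoeffC eqxx mulr1 add0r.
Qed.

Lemma ideal_hibi_prodM n m f g :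
  ideal_gen (hibi_prod_ge n) f -> ideal_gen (hibi_prod_ge m) g ->
  ideal_gen (hibi_prod_ge (n + m)) (f * g).
Proof.
move=> [l [Sl ->]] [l' [Sl' ->]].
rewrite mulr_suml; apply: ideal_gen_sum => pr l_pr.
have [R1 [L [size_L ideal_L ->]]] := Sl _ l_pr.
rewrite -mulrA; apply: ideal_genMl => //.
rewrite mulr_sumr; apply: ideal_gen_sum => pr' l_pr'.
have [R1' [L' [size_L' ideal_L' ->]]] := Sl' _ l_pr'.
rewrite mulrCA; apply: ideal_genMl => //; apply: ideal_gen_sub.
exists (L ++ L'); rewrite hibi_prod_cat size_cat all_cat ideal_L ideal_L'.
by split => //; apply: leq_add.
Qed.

Lemma m_pow_ideal r f : m_pow r f -> ideal_gen (hibi_prod_ge r) f.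
Proof.
move=> [l [Sl ->]]; apply: ideal_gen_sum => pr l_pr.
have [R1 [xs [<- m_xs ->]]] := Sl _ l_pr; apply: ideal_genMl => //.
elim: xs m_xs => [|x xs IH] m_xs.
  by rewrite big_nil; apply: ideal_gen_sub; exists [::]; rewrite /hibi_prod big_nil.
rewrite big_cons -[size _]/(1 + size xs)%N; apply: ideal_hibi_prodM.
  by apply: in_m_ideal; apply: m_xs; rewrite mem_head.
by apply: IH => y xs_y; apply: m_xs; rewrite inE xs_y orbT.
Qed.

End HibiRing.

Lemma count_leq_iota1 c n : count (fun k => k <= c) (iota 1 n) = minn c n.
Proof.
elim: n => [|n IH]; first by rewrite minn0.
by rewrite -[n.+1]addn1 iotaD count_cat IH /= addn0 add1n; case: leqP; lia.
Qed.

Section Factorization.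
Context {disp : Order.disp_t} {T : finPOrderType disp} {K : fieldType}.
Local Notation PR := {mpoly K[#|T|.+1]}.
Local Open Scope ring_scope.

Lemma count_mem_ideal_anti (L : seq {set T}) (x y : T) :
  all is_poset_ideal L -> (x <= y)%O ->
  (count (fun I : {set T} => y \in I) L <= count (fun I : {set T} => x \in I) L)%N.
Proof.
move=> ideal_L le_xy; elim: L ideal_L => [|I L IH] //= /andP[ideal_I /IH].
apply: leq_add; case: (boolP (y \in I)) => //= I_y.
by move: ideal_I => /forallP /(_ y) /forallP /(_ x) /implyP; rewrite le_xy I_y => ->.
Qed.

Lemma in_m_hibi_gen (J : {set T}) : is_poset_ideal J -> in_m (hibi_gen J : PR).
Proof.
move=> ideal_J; split; first exact: inHibi_gen.
move=> mm mm0; rewrite -hibi_prod1 hibi_prodE mcoeffX; case: eqP => // E.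
by move: mm0; rewrite -E hibi_mono0.
Qed.

Definition layers (b : T -> nat) n : seq {set T} :=
  [seq [set x | (k <= b x)%N] | k <- iota 1 n].

Lemma count_layers b n x :
  count (fun I : {set T} => x \in I) (layers b n) = minn (b x) n.
Proof.
rewrite /layers count_map -count_leq_iota1.
by apply: eq_count => k; rewrite /= inE.
Qed.

Lemma layers_ideal b n : (forall x y, (x <= y)%O -> b y <= b x)%N ->
  all is_poset_ideal (layers b n).
Proof.
move=> b_anti; apply/allP => _ /mapP [k _ ->].
apply/forallP => x; apply/forallP => y; apply/implyP => /andP[le_yx].
by rewrite !inE => /leq_trans; apply; apply: b_anti.
Qed.

Section Factor.
Variables (L : seq {set T}) (J : {set T}) (Q : nat).
Local Notation a x := (count (fun I : {set T} => x \in I) L).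
Local Notation b x := (a x - Q * (x \in J))%N.
Hypothesis Q_le : (Q <= size L)%N.
Hypothesis J_ge : forall x, x \in J -> (Q <= a x)%N.
Hypothesis notJ_le : forall x, x \notin J -> (a x <= size L - Q)%N.

Lemma hibi_prod_factor :
  hibi_prod L = hibi_prod (layers (fun x => b x) (size L - Q)) * hibi_gen J ^+ Q :> PR.
Proof.
rewrite -hibi_prod1 !hibi_prodE mpolyXn -mpolyXD; congr 'X_[_].
apply/mnmP => i; rewrite mnmDE mulmnE.
case: (unliftP ord0 i) => [k ->|->]; last first.
  by rewrite !hibi_mono0 size_map size_iota /= mul1n subnK.
have -> : lift ord0 k = varX (enum_val k) by rewrite /varX enum_valK.
rewrite !hibi_mono_varX count_layers /= addn0.
have a_le : (a (enum_val k) <= size L)%N by apply: count_size.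
have [J_k|notJ_k] := boolP (enum_val k \in J).
  by rewrite /= muln1 mul1n (minn_idPl (leq_sub2r _ a_le)) subnK // J_ge.
by have := notJ_le notJ_k; rewrite /= muln0 mul0n subn0 addn0 => /minn_idPl.
Qed.

End Factor.

Lemma hibi_prod_in_frob (L : seq {set T}) (Q : nat) :
  all is_poset_ideal L -> ((rankstar (T := T) + 2) * (Q - 1) + 1 <= size L)%N ->
  ideal_gen (T := T) (fun g : PR => exists x, in_m x /\ g = x ^+ Q) (hibi_prod L).
Proof.
move=> ideal_L large_L.
pose a x := count (fun I : {set T} => x \in I) L.
have a_anti x y : (x <= y)%O -> (a y <= a x)%N by apply: count_mem_ideal_anti.
pose J := frob_ideal a (size L) Q.
have Q_le : (Q <= size L)%N by nia.
rewrite (@hibi_prod_factor L J Q) //; last 2 first.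
- exact: frob_ideal_ge a_anti large_L.
- exact: notin_frob_ideal_le.
apply: ideal_genMl; first by apply/inHibi_prod/layers_ideal/sub_frob_ideal_anti.
apply: ideal_gen_sub; exists (hibi_gen J); split => //.
exact/in_m_hibi_gen/frob_ideal_is_poset_ideal.
Qed.

End Factorization.

(* The argument works for every Q. *)
Theorem lemma2p7 (K : fieldType) (p : nat) (charp : (p \in [pchar K])%R)
    (disp : Order.disp_t) (T : finPOrderType disp) :
  exists e0 : nat, forall e : nat, e0 <= e ->
    forall r : nat, (rankstar (T := T) + 2) * (p ^ e - 1) + 1 <= r ->
      forall f : {mpoly K[#|T|.+1]}, m_pow r f -> m_frob (p ^ e) f.
Proof.
exists 0 => e _ r large_r f /m_pow_ideal; apply: ideal_gen_trans.
move=> _ [L [size_L ideal_L ->]].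
exact: hibi_prod_in_frob ideal_L (leq_trans large_r size_L).
Qed.
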